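(* For every $t\le0$, the limit $\lim_{n\to\infty}\frac1n\log\mathbb{E}\big(e^{tH_n}\big)$ exists.
   Context: Standing setup (discrete-time Hawkes process, DTHP). Let $(a_i)_{i=0}^\infty$ be a sequence of strictly positive real numbers with $\sum_{i=0}^\infty a_i<1$ and $\sum_{i=1}^\infty i\,a_i<\infty$. The arrival process $\{\xi_n\}_{n\ge1}$ is a sequence of $\{0,1\}$-valued random variables on a probability space $(\Omega,\mathcal F,\mathbb P)$ with $\mathbb{P}(\xi_1=1)=a_0$, $\mathbb P(\xi_1=0)=1-a_0$, and for $n\ge2$, $$\mathbb{P}(\xi_n=1\mid \xi_1,\dots,\xi_{n-1})=a_0+\sum_{i=1}^{n-1}a_{n-i}\xi_i,\qquad \mathbb{P}(\xi_n=0\mid \xi_1,\dots,\xi_{n-1})=1-\Big(a_0+\sum_{i=1}^{n-1}a_{n-i}\xi_i\Big).$$ The DTHP is $H_n=\sum_{i=1}^n\xi_i$, and $\mathcal F_n=\sigma(\xi_1,\dots,\xi_n)$. *)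

From HB Require Import structures.
From mathcomp Require Import all_boot all_order all_algebra.
From mathcomp Require Import all_classical all_reals all_analysis.
Set Implicit Arguments. Unset Strict Implicit. Unset Printing Implicit Defensive.
Import Order.TTheory GRing.Theory Num.Theory.
Import numFieldNormedType.Exports.
Local Open Scope classical_set_scope.
Local Open Scope ring_scope.

(* Discrete-time Hawkes process.  Paper indexing is kept: the arrival
   variables are [xi 1], [xi 2], ...; [xi 0] is unused. *)

(* Conditional intensity of xi_{n+1} given (xi_1,...,xi_n) = (x 0,...,x (n-1)):
   a_0 + sum_{i=1}^{n} a_{n+1-i} xi_i. *)
Definition dthp_intensity (R : realType) (a : nat -> R) (n : nat)
  (x : {ffun 'I_n -> bool}) : R :=
  a 0%N + \sum_(i < n) a (n - i)%N * (x i)%:R.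

Definition dthp_hist d (T : measurableType d) (xi : nat -> T -> bool) (n : nat)
  (x : {ffun 'I_n -> bool}) : set T :=
  [set w | forall i : 'I_n, xi i.+1 w = x i].

Definition dthp_kernel (R : realType) (a : nat -> R) : Prop :=
  (forall i, 0 < a i) /\
  (\sum_(0 <= i <oo) (a i)%:E < 1)%E /\
  (\sum_(0 <= i <oo) (i%:R * a i)%:E < +oo)%E.

(* [xi] is a DTHP with kernel [a] on the probability space [P]:
   each xi_n is a measurable {0,1}-valued variable and, for every n >= 0 and
   every history x in {0,1}^n, P(xi_{n+1}=b | xi_1..xi_n = x) is given by the
   intensity (elementary conditional probability w.r.t. the finite partition
   generated by xi_1..xi_n, written multiplicatively so that null histories
   impose no constraint). *)
Definition is_DTHP d (T : measurableType d) (R : realType)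
  (P : probability T R) (a : nat -> R) (xi : nat -> T -> bool) : Prop :=
  (forall n, measurable [set w | xi n w]) /\
  (forall n (x : {ffun 'I_n -> bool}),
     P ([set w | xi n.+1 w = true] `&` dthp_hist xi x)
       = ((dthp_intensity a x)%:E * P (dthp_hist xi x))%E) /\
  (forall n (x : {ffun 'I_n -> bool}),
     P ([set w | xi n.+1 w = false] `&` dthp_hist xi x)
       = ((1 - dthp_intensity a x)%:E * P (dthp_hist xi x))%E).

Definition dthp_H d (T : measurableType d) (R : realType)
  (xi : nat -> T -> bool) (n : nat) (w : T) : R :=
  \sum_(1 <= i < n.+1) (xi i w)%:R.

From HB Require Import structures.
From mathcomp Require Import all_boot all_order all_algebra.
From mathcomp Require Import all_classical all_reals all_analysis.
From mathcomp Require Import ring lra measurable_realfun.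
Set Implicit Arguments. Unset Strict Implicit. Unset Printing Implicit Defensive.
Import Order.TTheory GRing.Theory Num.Theory.
Import numFieldNormedType.Exports.
Local Open Scope classical_set_scope.
Local Open Scope ring_scope.

(* For a history s in {0,1}^k, let L_m(s) be the conditional expectation of
   exp(t (H_{k+m} - H_k)) given xi_1..xi_k = s.  Conditioning on the next
   arrival gives a recursion for L_m(s) involving only the intensities.
   Extra past arrivals raise every later intensity, so for t <= 0 the map
   s |-> L_m(s) is antitone for the dominance order on histories, and the
   empty history is dominated by every history.  Hence
   L_{n+m}(empty) <= L_n(empty) L_m(empty), so log E exp(t H_n) = log L_n(empty)
   is subadditive and at least t n; Fekete's lemma gives the limit. *)

Section Subadditive.
Variables (R : realType) (u : nat -> R).
Hypothesis u_subadd : forall m n, u (m + n)%N <= u m + u n.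

Lemma subadditive_mulD k q r : u (q * k + r)%N <= q%:R * u k + u r.
Proof.
elim: q => [|q IH]; first by rewrite mul0n add0n mul0r add0r.
rewrite mulSn -addnA -natr1 mulrDl mul1r.
by apply: le_trans (u_subadd _ _) _; lra.
Qed.

Lemma subadditive_le_affine k : (0 < k)%N ->
  exists D, forall n, u n <= k%:R^-1 * u k * n%:R + D.
Proof.
move=> k_gt0; set c := k%:R^-1 * u k.
exists (k%:R * `|c| + k%:R * `|u 1%N| + `|u 0%N|) => n.
have k0 : (0 : R) < k%:R by rewrite ltr0n.
have r_lt_k : (n %% k)%:R < k%:R :> R by rewrite ltr_nat ltn_pmod.
have n_eq : n%:R = (n %/ k)%:R * k%:R + (n %% k)%:R :> R.
  by rewrite -natrM -natrD -divn_eq.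
have uk : u k = c * k%:R by rewrite /c mulrAC mulVf ?mul1r ?gt_eqF.
have ur : u (n %% k)%N <= (n %% k)%:R * u 1%N + u 0%N.
  by have := subadditive_mulD 1 (n %% k) 0; rewrite muln1 addn0.
have r_c : - ((n %% k)%:R * c) <= k%:R * `|c|.
  rewrite -mulrN; apply: le_trans (_ : _ <= (n %% k)%:R * `|c|) _.
    by apply: ler_wpM2l; rewrite ?ler0n // -normrN ler_norm.
  by apply: ler_wpM2r; [exact: normr_ge0 | exact: ltW].
have r_u1 : (n %% k)%:R * u 1%N <= k%:R * `|u 1%N|.
  apply: le_trans (_ : _ <= (n %% k)%:R * `|u 1%N|) _.
    by apply: ler_wpM2l; rewrite ?ler0n // ler_norm.
  by apply: ler_wpM2r; [exact: normr_ge0 | exact: ltW].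
have := subadditive_mulD k (n %/ k) (n %% k); rewrite -divn_eq uk.
have := ler_norm (u 0%N).
rewrite n_eq; lra.
Qed.

Lemma subadditive_cvg (c : R) : (forall n, c * n%:R <= u n) ->
  exists l : R, (fun n : nat => n%:R^-1 * u n) @ \oo --> l.
Proof.
move=> u_lb; pose S := [set n%:R^-1 * u n | n in [set n | (0 < n)%N]].
have S_lb : lbound S c.
  move=> _ [n n0 <-]; rewrite mulrC ler_pdivlMr ?ltr0n // mulrC; exact: u_lb.
have S_inf : has_inf S.
  by split; [exists (1%:R^-1 * u 1%N); exists 1%N | exists c].
exists (inf S); apply/cvgrPdist_le => e e0.
have e20 : 0 < e / 2 by rewrite divr_gt0.
have [_ [k k0 <-] uk] := inf_adherent e20 S_inf.
have [D uD] := @subadditive_le_affine k k0.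
near=> n.
have n0 : (0 : R) < n%:R by rewrite ltr0n; near: n; exact: nbhs_infty_gt.
have Dn : D < e / 2 * n%:R.
  by rewrite -ltr_pdivrMl //; near: n; exact: nbhs_infty_gtr.
have inf_le : inf S <= n%:R^-1 * u n.
  by apply: ge_inf; [case: S_inf | exists n => //; rewrite ltr0n in n0].
have : n%:R^-1 * u n <= inf S + e.
  rewrite mulrC ler_pdivrMr //; apply: le_trans (uD n) _.
  have := ltW uk; rewrite -(ler_pM2r n0); lra.
rewrite ler_norml; lra.
Unshelve. all: by end_near.
Qed.
End Subadditive.

Section ConditionalLaplace.
Variables (R : realType) (a : nat -> R) (t : R).
Hypothesis a_ge0 : forall i, 0 <= a i.
Hypothesis a_sum_le1 : forall n, \sum_(j < n) a j <= 1.
Hypothesis t_le0 : t <= 0.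

Definition intensity (s : seq bool) : R :=
  a 0%N + \sum_(i < size s) a (size s - i)%N * (nth false s i)%:R.

Lemma intensity_cons b s : intensity (b :: s) = intensity s + a (size s).+1 * b%:R.
Proof.
rewrite /intensity /= big_ord_recl subn0 [X in a 0%N + X]addrC addrA.
by congr (_ + _ + _).
Qed.

Lemma intensity_ge0 s : 0 <= intensity s.
Proof.
elim: s => [|b s IH]; first by rewrite /intensity big_ord0 addr0.
by rewrite intensity_cons addr_ge0 // mulr_ge0.
Qed.

Lemma intensity_le_sum s : intensity s <= \sum_(j < (size s).+1) a j.
Proof.
elim: s => [|b s IH]; first by rewrite /intensity !big_ord_recl !big_ord0.
rewrite intensity_cons big_ord_recr /= lerD //.
by case: b; rewrite ?mulr1 ?mulr0.
Qed.

Lemma intensity_le1 s : intensity s <= 1.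
Proof. exact: le_trans (intensity_le_sum s) (a_sum_le1 _). Qed.

(* [cond_laplace m s] is E[exp(t (H_{k+m} - H_k)) | xi_1..xi_k = s] with
   k = size s; see [integral_history]. *)
Fixpoint cond_laplace (m : nat) (s : seq bool) : R :=
  if m is m'.+1 then
    expR t * intensity s * cond_laplace m' (rcons s true)
    + (1 - intensity s) * cond_laplace m' (rcons s false)
  else 1.

Lemma cond_laplace_ge m s : expR (t * m%:R) <= cond_laplace m s.
Proof.
elim: m s => [|m IH] s /=; first by rewrite mulr0 expR0.
have := intensity_ge0 s; have := intensity_le1 s.
set l := intensity s; set E := expR (t * m%:R) => l_le1 l_ge0.
have -> : expR (t * m.+1%:R) = expR t * E by rewrite -expRD -natr1 mulrDr mulr1 addrC.
have et_le1 : expR t <= 1 by rewrite expR_le1.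
have h1 : expR t * l * E <= expR t * l * cond_laplace m (rcons s true).
  by rewrite ler_wpM2l ?mulr_ge0 ?expR_ge0.
have h2 : (1 - l) * E <= (1 - l) * cond_laplace m (rcons s false).
  by rewrite ler_wpM2l ?subr_ge0.
have h3 : (1 - l) * (expR t * E) <= (1 - l) * E.
  by rewrite ler_wpM2l ?subr_ge0 // ler_piMl ?expR_ge0.
lra.
Qed.

Lemma cond_laplace_gt0 m s : 0 < cond_laplace m s.
Proof. exact: lt_le_trans (expR_gt0 _) (cond_laplace_ge m s). Qed.

Definition dominates (x y : seq bool) :=
  forall z, intensity (y ++ z) <= intensity (x ++ z).

Lemma ler_intensity_cat x z1 z2 : size z1 = size z2 ->
  intensity z1 <= intensity z2 -> intensity (x ++ z1) <= intensity (x ++ z2).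
Proof.
move=> eq_size le_z; elim: x => [|b x IH] //=.
by rewrite !intensity_cons !size_cat eq_size lerD2r.
Qed.

Lemma dominates_nil x : dominates x [::].
Proof.
move=> z; elim: x => [|b x IH] //=.
by rewrite intensity_cons (le_trans IH) // lerDl mulr_ge0.
Qed.

Lemma dominates_rcons x y b : dominates x y -> dominates (rcons x b) (rcons y b).
Proof. by move=> dom z; rewrite !cat_rcons. Qed.

Lemma dominates_rcons_true_false x : dominates (rcons x true) (rcons x false).
Proof.
move=> z; rewrite !cat_rcons; apply: ler_intensity_cat => //.
by rewrite !intensity_cons lerD2l ler_wpM2l ?ler_nat.
Qed.

(* A history with more arrivals has a larger intensity at every later time,
   hence (as [t <= 0]) a smaller conditional Laplace transform. *)
Lemma cond_laplace_le_dominated m x y :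
  dominates x y -> cond_laplace m x <= cond_laplace m y.
Proof.
elim: m x y => [|m IH] x y dom //=.
have lyx : intensity y <= intensity x by have := dom [::]; rewrite !cats0.
have := intensity_le1 y; have := intensity_ge0 y.
set lx := intensity x; set ly := intensity y => ly_ge0 ly_le1.
set A := cond_laplace m (rcons x false); set B := cond_laplace m (rcons x true).
set A' := cond_laplace m (rcons y false); set B' := cond_laplace m (rcons y true).
have BA : B <= A by apply: IH; apply: dominates_rcons_true_false.
have AA' : A <= A' by apply: IH; apply: dominates_rcons.
have BB' : B <= B' by apply: IH; apply: dominates_rcons.
have etB : expR t * B <= B.
  by rewrite ler_piMl ?expR_le1 // ltW // cond_laplace_gt0.
have h1 : ly * (A - expR t * B) <= lx * (A - expR t * B).
  by rewrite ler_wpM2r // subr_ge0 (le_trans etB).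
have h2 : (1 - ly) * A <= (1 - ly) * A' by rewrite ler_wpM2l ?subr_ge0.
have h3 : ly * (expR t * B) <= ly * (expR t * B').
  by rewrite ler_wpM2l // ler_wpM2l ?expR_ge0.
lra.
Qed.

Lemma cond_laplace_submul n m s :
  cond_laplace (n + m) s <= cond_laplace n s * cond_laplace m [::].
Proof.
elim: n s => [|n IH] s /=.
  by rewrite mul1r; apply: cond_laplace_le_dominated; apply: dominates_nil.
have := intensity_le1 s; have := intensity_ge0 s.
set l := intensity s => l_ge0 l_le1.
have h1 : expR t * l * cond_laplace (n + m) (rcons s true)
    <= expR t * l * (cond_laplace n (rcons s true) * cond_laplace m [::]).
  by rewrite ler_wpM2l ?mulr_ge0 ?expR_ge0.
have h2 : (1 - l) * cond_laplace (n + m) (rcons s false)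
    <= (1 - l) * (cond_laplace n (rcons s false) * cond_laplace m [::]).
  by rewrite ler_wpM2l ?subr_ge0.
lra.
Qed.

End ConditionalLaplace.

Section Histories.
Variables (d : measure_display) (T : measurableType d) (R : realType).
Variables (P : probability T R) (a : nat -> R) (xi : nat -> T -> bool) (t : R).
Hypothesis dthp : is_DTHP P a xi.

Definition history (s : seq bool) : set T :=
  [set w | forall i, (i < size s)%N -> xi i.+1 w = nth false s i].

Definition increment (n m : nat) (w : T) : R :=
  \sum_(n.+1 <= i < (n + m).+1) (xi i w)%:R.

Lemma history_nil : history [::] = setT.
Proof. by apply/seteqP; split => w // _ i. Qed.

Lemma history_rcons s b :
  history (rcons s b) = [set w | xi (size s).+1 w = b] `&` history s.
Proof.
apply/seteqP; split => w /=.
- move=> h; split.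
    by have := h (size s); rewrite size_rcons ltnSn nth_rcons ltnn eqxx; apply.
  by move=> i lt_i; have := h i; rewrite size_rcons nth_rcons lt_i; apply; exact: ltnW.
- move=> [xi_b hs] i; rewrite size_rcons ltnS nth_rcons leq_eqVlt.
  by case/orP => [/eqP ->|lt_i]; [rewrite ltnn eqxx | rewrite lt_i; apply: hs].
Qed.

Lemma history_rcons_setU s :
  history s = history (rcons s true) `|` history (rcons s false).
Proof.
rewrite !history_rcons; apply/seteqP; split => w /=.
  by move=> hs; case: (xi (size s).+1 w); [left | right].
by case=> -[].
Qed.

Lemma history_rcons_disj s :
  [disjoint history (rcons s true) & history (rcons s false)].
Proof. by apply/disj_setPS => w; rewrite !history_rcons => -[[/= -> _] [//]]. Qed.

Lemma measurable_xi_eq n b : measurable [set w | xi n w = b].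
Proof.
case: b; first exact: dthp.1.
rewrite (_ : [set w | _] = ~` [set w | xi n w]); first exact: measurableC (dthp.1 n).
by apply/seteqP; split => w /=; [move=> -> | move/negP/negbTE].
Qed.

Lemma measurable_history s : measurable (history s).
Proof.
elim/last_ind: s => [|s b IH]; first by rewrite history_nil.
by rewrite history_rcons; apply: measurableI => //; apply: measurable_xi_eq.
Qed.

Lemma incrementS n m w : increment n m.+1 w = (xi n.+1 w)%:R + increment n.+1 m w.
Proof.
rewrite /increment big_ltn; last by rewrite ltnS addnS ltnS leq_addr.
by rewrite addnS addSn.
Qed.

Lemma measurable_increment n m : measurable_fun setT (increment n m).
Proof.
apply: measurable_sum => i.
rewrite (_ : (fun w => _) = \1_[set w | xi i w]); first exact: measurable_indic (dthp.1 i).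
apply/funext => w; rewrite indicE.
by case xw : (xi i w); [rewrite mem_set | rewrite memNset //= xw].
Qed.

Lemma prob_history_rcons s b : P (history (rcons s b))
  = ((if b then intensity a s else 1 - intensity a s)%:E * P (history s))%E.
Proof.
pose x : {ffun 'I_(size s) -> bool} := [ffun i : 'I_(size s) => nth false s i].
rewrite history_rcons.
have -> : history s = dthp_hist xi x.
  apply/seteqP; split => w /= h i; rewrite ?ffunE; first exact: h.
  by move=> lt_i; have := h (Ordinal lt_i); rewrite ffunE.
have -> : intensity a s = dthp_intensity a x.
  by rewrite /dthp_intensity; congr (_ + _); apply: eq_bigr => i _; rewrite ffunE.
by case: b; [exact: dthp.2.1 | exact: dthp.2.2].
Qed.

Lemma measurable_expR_increment n m :
  measurable_fun setT (fun w => (expR (t * increment n m w))%:E).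
Proof.
apply/measurable_EFinP; apply: measurableT_comp; first exact: measurable_expR.
by apply: measurableT_comp => //; exact: measurable_increment.
Qed.

Lemma integral_history m s :
  (\int[P]_(w in history s) (expR (t * increment (size s) m w))%:E
     = (cond_laplace a t m s)%:E * P (history s))%E.
Proof.
elim: m s => [|m IH] s.
  under eq_integral do rewrite /increment addn0 big_geq // mulr0 expR0.
  by rewrite integral_cst /= ?mul1e //; exact: measurable_history.
have integral_branch b :
  (\int[P]_(w in history (rcons s b)) (expR (t * increment (size s) m.+1 w))%:E
   = (expR (t * b%:R))%:E * ((cond_laplace a t m (rcons s b))%:E
                               * P (history (rcons s b))))%E.
  rewrite -IH size_rcons -ge0_integralZl_EFin ?expR_ge0 //.
  - apply: eq_integral => w; rewrite in_setE history_rcons => -[/= xi_b _].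
    by rewrite incrementS xi_b mulrDr expRD EFinM.
  - exact: measurable_history.
  - exact: measurable_funS measurableT (@subsetT _ _) (measurable_expR_increment _ _).
rewrite [in LHS]history_rcons_setU.
rewrite (ge0_integral_setU _ (measurable_history _) (measurable_history _)).
- rewrite !integral_branch !prob_history_rcons /=.
  have P_fin : P (history s) \is a fin_num.
    by apply: fin_num_measure; exact: measurable_history.
  rewrite -(fineK P_fin) -!EFinM -EFinD mulr1 mulr0 expR0; congr EFin; ring.
- rewrite -history_rcons_setU.
  exact: measurable_funS measurableT (@subsetT _ _) (measurable_expR_increment _ _).
- by move=> w _; rewrite lee_fin expR_ge0.
- exact: history_rcons_disj.
Qed.

Lemma integral_expR_dthp_H n :
  (\int[P]_w (expR (t * dthp_H R xi n w))%:E = (cond_laplace a t n [::])%:E)%E.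
Proof. by have := integral_history n [::]; rewrite history_nil probability_setT mule1. Qed.

End Histories.

Lemma dthp_kernel_sum_lt1 (R : realType) (a : nat -> R) :
  dthp_kernel a -> forall n, \sum_(j < n) a j < 1.
Proof.
case=> a_gt0 [a_sum_lt1 _] n.
have partial_le : (\sum_(0 <= i < n) (a i)%:E <= \sum_(0 <= i <oo) (a i)%:E)%E.
  by apply: nneseries_lim_ge => i _ _; rewrite lee_fin ltW.
by have := le_lt_trans partial_le a_sum_lt1; rewrite sumEFin lte_fin big_mkord.
Qed.

Theorem lemma4p6 (d : measure_display) (T : measurableType d) (R : realType)
  (P : probability T R) (a : nat -> R) (xi : nat -> T -> bool)
  (ha : dthp_kernel a) (hxi : is_DTHP P a xi) (t : R) (ht : t <= 0) :
  exists l : R,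
    (fun n : nat =>
       n%:R^-1 * ln (fine (\int[P]_w (expR (t * dthp_H R xi n w))%:E)))
      @ \oo --> l.
Proof.
have a_ge0 i : 0 <= a i by exact: ltW (ha.1 i).
have a_sum_le1 n : \sum_(j < n) a j <= 1 by exact: ltW (dthp_kernel_sum_lt1 ha n).
have L_pos n : cond_laplace a t n [::] \is Num.pos.
  by rewrite posrE (cond_laplace_gt0 a_ge0 a_sum_le1 ht).
apply: (@subadditive_cvg _ _ _ t) => [n m | n].
- rewrite !(integral_expR_dthp_H t hxi) /= -lnM // ler_ln ?posrE ?mulr_gt0 -?posrE //.
  exact: cond_laplace_submul.
- rewrite (integral_expR_dthp_H t hxi) /= -[X in X <= _]expRK.
  rewrite ler_ln ?posrE ?expR_gt0 -?posrE //.
  exact: cond_laplace_ge.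
Qed.
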